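(* Let $\ket{W_4}=\frac12(|1000\rangle+|0100\rangle+|0010\rangle+|0001\rangle)$ and let $\mathcal G_{VI}$ be the graph on $\{A,B,C,D\}$ with edges $AB,AC,AD,BD$. Then $$\frac{3+\sqrt3}{6}\le P(W_4,\mathcal G_{VI}).$$
   Context: $P(\psi,\mathcal G)$: for a graph $\mathcal G=(V,E)$ on the four parties $A,B,C,D$ (each holding one qubit), the supremum over all LOCC protocols (local operations and classical communication, allowing arbitrarily many rounds) acting on a single copy of $\psi$ of $\sum_{(i,j)\in E}p_{ij}$, where $p_{ij}$ is the probability that the protocol ends with parties $i,j$ sharing a state local-unitarily equivalent to $\frac1{\sqrt2}(|00\rangle+|11\rangle)$ and all other parties in a product state. *)

From HB Require Import structures.
From mathcomp Require Import all_boot all_order all_algebra all_field.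
Set Implicit Arguments. Unset Strict Implicit. Unset Printing Implicit Defensive.
Import Order.TTheory GRing.Theory Num.Theory.
Local Open Scope ring_scope.

(* Parties A,B,C,D are 0,1,2,3 : 'I_4; computational basis of (C^2)^{⊗4}
   is indexed by x : {ffun 'I_4 -> 'I_2}; a (possibly unnormalized) pure
   state is a function from basis indices to complex amplitudes. *)
Definition qidx := {ffun 'I_4 -> 'I_2}.
Definition qstate := qidx -> algC.

Definition upd (x : qidx) (i : 'I_4) (c : 'I_2) : qidx :=
  [ffun k => if k == i then c else x k].

Definition apply_local (K : 'M[algC]_2) (i : 'I_4) (phi : qstate) : qstate :=
  fun x => \sum_(c < 2) K (x i) c * phi (upd x i c).

Definition adjmx (A : 'M[algC]_2) : 'M[algC]_2 := (map_mx (fun z => z^*) A)^T.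
Definition unitary2 (U : 'M[algC]_2) : Prop := U *m adjmx U = 1%:M.

Definition norm2 (phi : qstate) : algC := \sum_(x : qidx) `|phi x| ^+ 2.

(* phi is (up to normalisation) a state in which parties i,j share a state
   LU-equivalent to (|00>+|11>)/sqrt2 and every other party is in a product
   state: phi = (U (x) V)|Phi+>_{ij} (x) (product of single-qubit vectors f k). *)
Definition bell_prod (i j : 'I_4) (phi : qstate) : Prop :=
  exists (U V : 'M[algC]_2) (f : 'I_4 -> 'I_2 -> algC),
    unitary2 U /\ unitary2 V /\
    forall x : qidx,
      phi x = (\sum_(c < 2) U (x i) c * V (x j) c)
              * \prod_(k < 4 | (k != i) && (k != j)) f k (x k).

(* Finite-round LOCC protocols on single-qubit parties, as classical decision
   trees: at each node one party performs a local measurement with Kraus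
   operators K_1..K_m (outcome broadcast), and the protocol continues with the
   subtree of the outcome.  Leaves are labelled with the edge (if any) whose
   success they claim. *)
Inductive locc : Type :=
| Stop of option ('I_4 * 'I_4)
| Meas of 'I_4 & seq ('M[algC]_2 * locc).

Fixpoint valid (G : seq ('I_4 * 'I_4)) (p : locc) (phi : qstate) : Prop :=
  match p with
  | Stop None => True
  | Stop (Some e) => e \in G /\ bell_prod e.1 e.2 phi
  | Meas i br =>
      \sum_(b <- br) (adjmx b.1 *m b.1) = 1%:M /\
      (fix vl (l : seq ('M[algC]_2 * locc)) : Prop :=
         match l with
         | [::] => True
         | (K, q) :: l' => valid G q (apply_local K i phi) /\ vl l'
         end) br
  end.

(* total success probability: sum over claimed-successful leaves of the
   squared norm of the (unnormalized) branch state *)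
Fixpoint value (p : locc) (phi : qstate) : algC :=
  match p with
  | Stop None => 0
  | Stop (Some _) => norm2 phi
  | Meas i br =>
      (fix vl (l : seq ('M[algC]_2 * locc)) : algC :=
         match l with
         | [::] => 0
         | (K, q) :: l' => value q (apply_local K i phi) + vl l'
         end) br
  end.

Definition W4 : qstate :=
  fun x => if (\sum_(k < 4) (x k : nat) == 1)%N then 2^-1 else 0.

Definition pA : 'I_4 := @Ordinal 4 0 isT.
Definition pB : 'I_4 := @Ordinal 4 1 isT.
Definition pC : 'I_4 := @Ordinal 4 2 isT.
Definition pD : 'I_4 := @Ordinal 4 3 isT.

Definition G_VI : seq ('I_4 * 'I_4) := [:: (pA, pB); (pA, pC); (pA, pD); (pB, pD)].

From HB Require Import structures.
From mathcomp Require Import all_boot all_order all_algebra all_field.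
From mathcomp Require Import ring lra.
From Stdlib Require Import FunctionalExtensionality.
Import Order.TTheory GRing.Theory Num.Theory.
Local Open Scope ring_scope.
Set Implicit Arguments. Unset Strict Implicit. Unset Printing Implicit Defensive.

(* All states met by the protocols lie in the W class
   Wstate a = sum_k a_k |e_k>, where e_k is the basis index with a single
   excitation at party k.  A two-outcome measurement by party i with diagonal
   Kraus operators only rescales the amplitudes (apply_dmx), and a W-class
   state whose nonzero amplitudes are two equal ones on parties i, j is an
   EPR pair on {i, j} times |0> elsewhere (bell_edge).  Validity and success
   probability of a tree of such measurements thus reduce to bookkeeping of
   four amplitudes.

   Protocol (w4_protocol): C, A, B, D in turn apply the weak filter
   {diag(m,1), diag(n,0)}.  The outcome diag(n,0) removes the measuring party
   and leaves a three-party W state, which is turned into an EPR pair on an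
   edge of G_VI, by a computational-basis measurement (success 2/3) or, when
   C dropped out, by the analogous weak-filter protocol on the triangle ABD
   (triangle).  The success probabilities are explicit geometric sums
   (tri_value, w4_value).  With |m|^2 = (sqrt 3 - 1)/2, |s|^2 = 1 - d and
   M, N large they approach (3 + sqrt 3)/6; these estimates are proved over
   any archimedean real field, via Bernoulli's inequality, and transported
   from the real algebraic numbers algR to algC. *)

Lemma ord2P (r : 'I_2) : r = ord0 \/ r = ord_max.
Proof. by case: r => [[|[|//]] ?]; [left|right]; apply: val_inj. Qed.

Definition exc (k : 'I_4) : qidx := [ffun m => if m == k then ord_max else ord0].

Lemma exc_eq (k m : 'I_4) : (exc k == exc m) = (k == m).
Proof.
apply/eqP/eqP => [|-> //] /(congr1 (fun x : qidx => x k)).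
by rewrite !ffunE eqxx; case: eqP.
Qed.

Lemma exc_cases (x : qidx) : (exists k, x = exc k) \/ (forall k, x != exc k).
Proof.
case: (pickP (fun k => x == exc k)) => [k /eqP ->|none]; first by left; exists k.
by right => k; rewrite none.
Qed.

Lemma exc_from (x : qidx) k :
  x k = ord_max -> (forall m, m != k -> x m = ord0) -> x = exc k.
Proof.
move=> xk rest; apply/ffunP => m; rewrite ffunE.
by case: eqP => [-> //|/eqP /rest].
Qed.

Lemma weight_one (x : qidx) :
  (\sum_(k < 4) (x k : nat) == 1)%N -> exists k, x = exc k.
Proof.
move=> sum1.
have [k xk] : exists k, x k = ord_max.
  case: (pickP (fun k => x k == ord_max)) => [k /eqP|none]; first by exists k.
  move: sum1; rewrite big1 // => k _.
  by case: (ord2P (x k)) (none k) => ->; rewrite ?eqxx.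
move: sum1; rewrite (bigD1 k) //= xk add1n eqSS sum_nat_eq0 => /forallP rest0.
exists k; apply: exc_from => // m mk.
by apply: val_inj; apply/eqP; have := rest0 m; rewrite mk.
Qed.

Definition Wstate (a : 'I_4 -> algC) : qstate :=
  fun x => \sum_(k < 4) (x == exc k)%:R * a k.

Lemma Wstate_exc a k : Wstate a (exc k) = a k.
Proof.
rewrite /Wstate (bigD1 k) //= eqxx mul1r big1 ?addr0 // => m /negbTE.
by rewrite exc_eq eq_sym => ->; rewrite mul0r.
Qed.

Lemma Wstate_out a x : (forall k, x != exc k) -> Wstate a x = 0.
Proof. by move=> hx; rewrite /Wstate big1 // => k _; rewrite (negbTE (hx k)) mul0r. Qed.

Lemma norm2_Wstate a : norm2 (Wstate a) = \sum_(k < 4) `|a k| ^+ 2.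
Proof.
have sq x : `|Wstate a x| ^+ 2 = Wstate (fun k => `|a k| ^+ 2) x.
  case: (exc_cases x) => [[k ->]|hx]; first by rewrite !Wstate_exc.
  by rewrite !Wstate_out // normr0 expr0n.
rewrite /norm2; under eq_bigr do rewrite sq.
rewrite /Wstate exchange_big /=; apply: eq_bigr => k _.
rewrite -big_distrl /= (bigD1 (exc k)) //= eqxx big1 ?addr0 ?mul1r // => y.
by move=> /negbTE ->.
Qed.

Definition dmx (d0 d1 : algC) : 'M[algC]_2 :=
  \matrix_(r, c) if r == c then (if r == ord0 then d0 else d1) else 0.

Definition scale (i : 'I_4) (d0 d1 : algC) (a : 'I_4 -> algC) : 'I_4 -> algC :=
  fun k => (if k == i then d1 else d0) * a k.

Lemma upd_id (x : qidx) i : upd x i (x i) = x.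
Proof. by apply/ffunP => k; rewrite ffunE; case: eqP => // ->. Qed.

Lemma apply_dmx d0 d1 i a :
  apply_local (dmx d0 d1) i (Wstate a) = Wstate (scale i d0 d1 a).
Proof.
apply: functional_extensionality => x; rewrite /apply_local (bigD1 (x i)) //=.
rewrite big1 => [|c /negbTE]; last by rewrite mxE eq_sym => ->; rewrite mul0r.
rewrite addr0 upd_id mxE eqxx.
case: (exc_cases x) => [[k ->]|hx]; last by rewrite !Wstate_out // mulr0.
by rewrite !Wstate_exc /scale ffunE [k == i]eq_sym; case: (i == k).
Qed.

Lemma kraus_dmx a0 a1 b0 b1 :
  a0^* * a0 + b0^* * b0 = 1 -> a1^* * a1 + b1^* * b1 = 1 ->
  adjmx (dmx a0 a1) *m dmx a0 a1 + adjmx (dmx b0 b1) *m dmx b0 b1 = 1%:M.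
Proof.
move=> h0 h1; apply/matrixP => r s; rewrite !mxE !big_ord_recl !big_ord0 !mxE.
by case: (ord2P r) => ->; case: (ord2P s) => -> /=;
  rewrite ?conjC0 ?mul0r ?mulr0 ?addr0 ?add0r.
Qed.

(* EPR pairs inside the W class: the amplitudes g on parties i, j, zero
   elsewhere, give (X (x) 1)|Phi+>_{ij} times sqrt g |0> on the two others. *)

Definition pair_amp (i j : 'I_4) (g : algC) (k : 'I_4) : algC :=
  if (k == i) || (k == j) then g else 0.
Arguments pair_amp i j g k /.

Definition Xmx : 'M[algC]_2 := \matrix_(r, c) (r != c)%:R.

Lemma unitary_X : unitary2 Xmx.
Proof.
apply/matrixP => r s; rewrite !mxE !big_ord_recl !big_ord0 !mxE.
by case: (ord2P r) => ->; case: (ord2P s) => -> /=;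
  rewrite ?conjC0 ?conjC1 ?mul0r ?mulr0 ?mulr1 ?addr0 ?add0r.
Qed.

Lemma unitary_1 : unitary2 1%:M.
Proof.
apply/matrixP => r s; rewrite !mxE !big_ord_recl !big_ord0 !mxE.
by case: (ord2P r) => ->; case: (ord2P s) => -> /=;
  rewrite ?conjC0 ?conjC1 ?mul0r ?mulr0 ?mulr1 ?addr0 ?add0r.
Qed.

Lemma prod_indicator (I : finType) (R : comPzSemiRingType) (P b : pred I) :
  \prod_(k | P k) (b k)%:R = [forall k, P k ==> b k]%:R :> R.
Proof.
case: (boolP [forall k, _]) => [/forallP all_b|/forallPn [k]].
  by rewrite big1 // => k Pk; have /implyP/(_ Pk) -> := all_b k.
by rewrite negb_imply => /andP [Pk /negbTE bk]; rewrite (bigD1 k) //= bk mul0r.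
Qed.

Lemma card_others (i j : 'I_4) :
  i != j -> #|[pred k | (k != i) && (k != j)]| = 2%N.
Proof.
move=> hij; have := cardC (pred2 i j); rewrite card2 hij card_ord.
rewrite (@eq_card _ _ [pred k | (k != i) && (k != j)]) => [[] //|k].
by rewrite !inE negb_or.
Qed.

Lemma Wstate_pair a i j g : a =1 pair_amp i j g ->
  forall x, Wstate a x = ((x == exc i) || (x == exc j))%:R * g.
Proof.
move=> ha x; case: (exc_cases x) => [[k ->]|hx]; last first.
  by rewrite Wstate_out // (negbTE (hx i)) (negbTE (hx j)) mul0r.
by rewrite Wstate_exc ha /= !exc_eq; case: ifP; rewrite ?mul1r ?mul0r.
Qed.

Lemma pair_indicator (x : qidx) i j : i != j ->
  ((x == exc i) || (x == exc j)) =
  (x i != x j) && [forall k, (k != i) && (k != j) ==> (x k == ord0)].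
Proof.
move=> hij; have hji : (j == i) = false by rewrite eq_sym (negbTE hij).
apply/idP/idP.
  case/orP => /eqP ->; rewrite !ffunE eqxx ?(negbTE hij) ?hji /=;
  by apply/forallP => k; apply/implyP => /andP [/negbTE ki /negbTE kj]; rewrite ffunE ?ki ?kj.
case/andP => xij /forallP others.
have rest m : m != i -> m != j -> x m = ord0.
  by move=> mi mj; apply/eqP; have := others m; rewrite mi mj.
case: (ord2P (x i)) => xi; apply/orP; [right|left]; apply/eqP; apply: exc_from.
- by case: (ord2P (x j)) xij => ->; rewrite xi.
- by move=> m mj; case: (m =P i) => [-> //|/eqP mi]; apply: rest.
- by [].
- move=> m mi; case: (m =P j) => [->|/eqP mj]; last exact: rest.
  by case: (ord2P (x j)) xij => ->; rewrite xi.
Qed.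

Lemma bell_edge a i j g : i != j -> a =1 pair_amp i j g -> bell_prod i j (Wstate a).
Proof.
move=> hij ha.
exists Xmx, 1%:M, (fun _ b => (b == ord0)%:R * sqrtC g).
split; first exact: unitary_X; split; first exact: unitary_1.
move=> x; rewrite (Wstate_pair ha) (pair_indicator x hij).
rewrite big_split /= prodr_const card_others // sqrtCK prod_indicator.
have -> : \sum_(c < 2) Xmx (x i) c * (1%:M : 'M[algC]_2) (x j) c = (x i != x j)%:R.
  rewrite (bigD1 (x j)) //= big1 => [|c cj]; first by rewrite !mxE eqxx mulr1 addr0.
  by rewrite !mxE (eq_sym (x j)) (negbTE cj) mulr0.
by rewrite -mulnb natrM mulrA.
Qed.

Lemma ord4P (P : 'I_4 -> Prop) : P pA -> P pB -> P pC -> P pD -> forall k, P k.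
Proof.
move=> hA hB hC hD [[|[|[|[|//]]]] k4].
- by rewrite (_ : Ordinal k4 = pA) //; apply: val_inj.
- by rewrite (_ : Ordinal k4 = pB) //; apply: val_inj.
- by rewrite (_ : Ordinal k4 = pC) //; apply: val_inj.
- by rewrite (_ : Ordinal k4 = pD) //; apply: val_inj.
Qed.

Definition amp4 (a b c d : algC) (k : 'I_4) : algC :=
  if k == pA then a else if k == pB then b else if k == pC then c else d.
Arguments amp4 a b c d k /.

Lemma scale_amp4 i d0 d1 a b c d :
  let f k := if k == i then d1 else d0 in
  scale i d0 d1 (amp4 a b c d) = amp4 (f pA * a) (f pB * b) (f pC * c) (f pD * d).
Proof. by apply: functional_extensionality; apply: ord4P. Qed.

Lemma norm2_amp4 a b c d :
  norm2 (Wstate (amp4 a b c d)) = `|a| ^+ 2 + `|b| ^+ 2 + `|c| ^+ 2 + `|d| ^+ 2.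
Proof. by rewrite norm2_Wstate !big_ord_recl big_ord0 addr0 !addrA. Qed.

Lemma W4_Wstate : W4 = Wstate (amp4 2^-1 2^-1 2^-1 2^-1).
Proof.
apply: functional_extensionality => x; rewrite /W4.
case: (exc_cases x) => [[k ->]|hx]; last first.
  by rewrite Wstate_out //; case: ifP => // /weight_one [k xk]; have := hx k; rewrite xk eqxx.
rewrite Wstate_exc (bigD1 k) //= ffunE eqxx big1 => [|m /negbTE mk]; last by rewrite ffunE mk.
by do !case: ifP.
Qed.

Definition dmeas (i : 'I_4) (a0 a1 b0 b1 : algC) (p q : locc) : locc :=
  Meas i [:: (dmx a0 a1, p); (dmx b0 b1, q)].

Lemma valid_dmeas G i a0 a1 b0 b1 p q a :
  a0^* * a0 + b0^* * b0 = 1 -> a1^* * a1 + b1^* * b1 = 1 ->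
  valid G p (Wstate (scale i a0 a1 a)) -> valid G q (Wstate (scale i b0 b1 a)) ->
  valid G (dmeas i a0 a1 b0 b1 p q) (Wstate a).
Proof.
move=> h0 h1 vp vq; rewrite /= !apply_dmx !big_cons big_nil addr0.
by split; first exact: kraus_dmx.
Qed.

Lemma value_dmeas i a0 a1 b0 b1 p q a :
  value (dmeas i a0 a1 b0 b1 p q) (Wstate a) =
  value p (Wstate (scale i a0 a1 a)) + value q (Wstate (scale i b0 b1 a)).
Proof. by rewrite /= !apply_dmx addr0. Qed.

Lemma valid_success G i j a g : (i, j) \in G -> i != j -> a =1 pair_amp i j g ->
  valid G (Stop (Some (i, j))) (Wstate a).
Proof. by move=> ijG hij ha; split; last exact: bell_edge. Qed.

Lemma kraus_proj : 1^* * 1 + 0^* * 0 = 1 :> algC.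
Proof. by rewrite conjC1 conjC0 mulr1 mulr0 addr0. Qed.

(* The weak filter {diag(m,1), diag(n,0)} of party i: "keep" shifts weight
   towards party i, "drop" projects party i onto |0>. *)
Definition weak (i : 'I_4) (m n : algC) (keep drop : locc) : locc :=
  dmeas i m 1 n 0 keep drop.

Lemma valid_weak G i m n keep drop a : m^* * m + n^* * n = 1 ->
  valid G keep (Wstate (scale i m 1 a)) -> valid G drop (Wstate (scale i n 0 a)) ->
  valid G (weak i m n keep drop) (Wstate a).
Proof. by move=> hmn; apply: valid_dmeas => //; exact: kraus_proj. Qed.

Definition zmeas (i : 'I_4) (e : 'I_4 * 'I_4) : locc :=
  dmeas i 1 0 0 1 (Stop (Some e)) (Stop None).

Lemma valid_zmeas G i e a :
  valid G (Stop (Some e)) (Wstate (scale i 1 0 a)) -> valid G (zmeas i e) (Wstate a).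
Proof. by move=> ok; apply: valid_dmeas => //; rewrite ?kraus_proj // addrC kraus_proj. Qed.

Lemma geom_shift (R : pzSemiRingType) (x : R) (k M : nat) :
  \sum_(i < M.+1) x ^+ (k * i) = 1 + x ^+ k * \sum_(i < M) x ^+ (k * i).
Proof.
rewrite big_ord_recl muln0 expr0 big_distrr; congr (_ + _).
by apply: eq_bigr => i _; rewrite /= mulnS exprD.
Qed.

(* M rounds of the triangle protocol, with filter weights S = |s|^2, T = |t|^2. *)
Definition tri_value (R : pzSemiRingType) (S T : R) (M : nat) : R :=
  (4 * S * T + 2 * T) * \sum_(i < M) S ^+ (2 * i).

(* N rounds of the W4 protocol, with U = |m|^2, V = |n|^2. *)
Definition w4_value (R : pzSemiRingType) (U V S T : R) (M N : nat) : R :=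
  V * (2 * U ^+ 2 + 4 * U + tri_value S T M) * \sum_(j < N) U ^+ (3 * j).

(* The triangle protocol on the W state of A, B, D (edges AB, AD, BD): A, B, D
   apply the weak filter {diag(s,1), diag(t,0)}; a drop of A leaves the EPR
   pair BD, a drop of D the pair AB; after a drop of B, the filter
   {diag(1,s), diag(0,t)} of A rebalances A against D into the pair AD. *)
Fixpoint triangle (s t : algC) (M : nat) : locc :=
  if M is M'.+1 then
    weak pA s t
      (weak pB s t
         (weak pD s t (triangle s t M') (Stop (Some (pA, pB))))
         (dmeas pA 1 s 0 t (Stop (Some (pA, pD))) (Stop None)))
      (Stop (Some (pB, pD)))
  else Stop None.

Lemma valid_triangle s t : s^* * s + t^* * t = 1 ->
  forall M (w a b c d : algC), a = w -> b = w -> c = 0 -> d = w ->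
  valid G_VI (triangle s t M) (Wstate (amp4 a b c d)).
Proof.
move=> hst; elim=> [|M IH] w a b c d -> -> -> -> //.
apply: valid_weak => //; rewrite scale_amp4 /=.
  apply: valid_weak => //; rewrite scale_amp4 /=.
    apply: valid_weak => //; rewrite scale_amp4 /=.
      by apply: (IH (s * s * w)); ring.
    by apply: (valid_success (g := t * (s * w))) => // k; elim/ord4P: k => /=; ring.
  apply: valid_dmeas => //; first exact: kraus_proj; rewrite scale_amp4 /=.
  by apply: (valid_success (g := s * (t * w))) => // k; elim/ord4P: k => /=; ring.
by apply: (valid_success (g := t * w)) => // k; elim/ord4P: k => /=; ring.
Qed.

Lemma value_triangle s t M : forall w a b c d : algC, a = w -> b = w -> c = 0 -> d = w ->
  value (triangle s t M) (Wstate (amp4 a b c d)) =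
  tri_value (`|s| ^+ 2) (`|t| ^+ 2) M * `|w| ^+ 2.
Proof.
rewrite /tri_value; elim: M => [|M IH] w a b c d -> -> -> ->.
  by rewrite big_ord0 mulr0 mul0r.
rewrite !value_dmeas !scale_amp4 /= (IH (s * s * w)); try ring.
rewrite !norm2_amp4 geom_shift !normrM normr0 ?normr1 !exprMn.
ring.
Qed.

Fixpoint w4_protocol (m n s t : algC) (M N : nat) : locc :=
  if N is N'.+1 then
    weak pC m n
      (weak pA m n
         (weak pB m n
            (weak pD m n (w4_protocol m n s t M N') (zmeas pB (pA, pC)))
            (zmeas pD (pA, pC)))
         (zmeas pC (pB, pD)))
      (triangle s t M)
  else Stop None.

Lemma valid_w4_protocol m n s t M :
  m^* * m + n^* * n = 1 -> s^* * s + t^* * t = 1 ->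
  forall N (w a b c d : algC), a = w -> b = w -> c = w -> d = w ->
  valid G_VI (w4_protocol m n s t M N) (Wstate (amp4 a b c d)).
Proof.
move=> hmn hst; elim=> [|N IH] w a b c d -> -> -> -> //.
apply: valid_weak => //; rewrite scale_amp4 /=.
  apply: valid_weak => //; rewrite scale_amp4 /=.
    apply: valid_weak => //; rewrite scale_amp4 /=.
      apply: valid_weak => //; rewrite scale_amp4 /=.
        by apply: (IH (m * m * m * w)); ring.
      apply: valid_zmeas; rewrite scale_amp4 /=.
      by apply: (valid_success (g := n * (m * m * w))) => // k; elim/ord4P: k => /=; ring.
    apply: valid_zmeas; rewrite scale_amp4 /=.
    by apply: (valid_success (g := n * (m * w))) => // k; elim/ord4P: k => /=; ring.
  apply: valid_zmeas; rewrite scale_amp4 /=.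
  by apply: (valid_success (g := n * (m * w))) => // k; elim/ord4P: k => /=; ring.
by apply: (@valid_triangle s t hst M (n * w)); ring.
Qed.

Lemma value_w4_protocol m n s t M N : forall w a b c d : algC, a = w -> b = w -> c = w -> d = w ->
  value (w4_protocol m n s t M N) (Wstate (amp4 a b c d)) =
  w4_value (`|m| ^+ 2) (`|n| ^+ 2) (`|s| ^+ 2) (`|t| ^+ 2) M N * `|w| ^+ 2.
Proof.
rewrite /w4_value; elim: N => [|N IH] w a b c d -> -> -> ->.
  by rewrite big_ord0 mulr0 mul0r.
rewrite !value_dmeas !scale_amp4 /= (IH (m * m * m * w)); try ring.
rewrite (@value_triangle s t M (n * w)); try ring.
rewrite !norm2_amp4 geom_shift !normrM normr0 ?normr1 !exprMn.
ring.
Qed.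

Lemma bernoulli (R : realDomainType) (y : R) (n : nat) :
  0 <= y -> y <= 1 -> (1 - y) ^+ n * (1 + n%:R * y) <= 1.
Proof.
move=> y0 y1; elim: n => [|n IH]; first by rewrite expr0 mul0r addr0 mulr1.
have P0 : 0 <= (1 - y) ^+ n by rewrite exprn_ge0 // subr_ge0.
have extra : 0 <= (1 - y) ^+ n * (n%:R + 1) * y ^+ 2.
  by rewrite !mulr_ge0 ?sqr_ge0 // addr_ge0 // ler0n.
rewrite exprSr -natr1; nra.
Qed.

Lemma pow_small (R : archiRealFieldType) (x e : R) :
  0 <= x -> x < 1 -> 0 < e -> exists n, x ^+ n <= e.
Proof.
move=> x0 x1 e0; have y0 : 0 < 1 - x by rewrite subr_gt0.
have ey0 : 0 < e * (1 - x) by rewrite mulr_gt0.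
have ey1 : (e * (1 - x))^-1 * (e * (1 - x)) = 1 by rewrite mulVf // gt_eqF.
have [n n_big] : exists n : nat, (e * (1 - x))^-1 < n%:R.
  by eexists; apply: archi_boundP; rewrite invr_ge0 ltW.
have y1 : 1 - x <= 1 by lra.
exists n; have := bernoulli n (ltW y0) y1.
rewrite opprB addrC subrK; set K := n%:R * (1 - x) => bern.
have Ke : 1 < K * e by rewrite /K; nra.
have X0 : 0 <= x ^+ n by rewrite exprn_ge0.
nra.
Qed.

Lemma geom_closed (R : comPzRingType) (x : R) (k n : nat) :
  (1 - x ^+ k) * \sum_(i < n) x ^+ (k * i) = 1 - x ^+ (k * n).
Proof.
have := subrX1 (x ^+ k) n; rewrite -exprM; under eq_bigr do rewrite -exprM.
by move=> h; rewrite -opprB mulNr -h opprB.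
Qed.

(* With S = 1 - d and P = S^(2M): (2 - d) tri_value = (6 - 4d)(1 - P), whence
   (3 - d)(1 - P) <= tri_value <= 3. *)
Lemma tri_value_bounds (R : realFieldType) (d : R) (M : nat) : 0 <= d -> d <= 1 ->
  3 - d - 3 * (1 - d) ^+ (2 * M) <= tri_value (1 - d) d M <= 3.
Proof.
move=> d0 d1; rewrite /tri_value.
have := geom_closed (1 - d) 2 M.
move: (\sum_(i < M) _) => G; set P := (1 - d) ^+ (2 * M) => geom.
have P0 : 0 <= P by rewrite exprn_ge0 // subr_ge0.
have P1 : P <= 1 by rewrite exprn_ile1 // ?subr_ge0 // lerBlDr lerDl.
apply/andP; split; nra.
Qed.

(* For a root U of 2U^2 + 2U = 1, one has 1 + U + U^2 = 3/2 and
   2U^2 + 4U = 1 + 2U, so w4_value = 2/3 (1 + 2U + tri_value)(1 - U^(3N)). *)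
Lemma w4_value_closed (R : realFieldType) (U S T : R) (M N : nat) :
  2 * U ^+ 2 + 2 * U = 1 ->
  3 * w4_value U (1 - U) S T M N = 2 * (1 + 2 * U + tri_value S T M) * (1 - U ^+ (3 * N)).
Proof.
move=> hU; rewrite /w4_value -geom_closed.
have -> : 2 * U ^+ 2 + 4 * U = 1 + 2 * U by lra.
have -> : 1 - U ^+ 3 = (1 - U) * (1 + U + U ^+ 2) by ring.
have cube : 2 * (1 + U + U ^+ 2) = 3 by lra.
rewrite -[in LHS]cube; ring.
Qed.

(* The quarter of w4_value (the weight |1/2|^2 of each amplitude of W4) comes
   within e of (2 + U)/3 for d small and M, N large: d, (1-d)^(2M) and
   U^(3N) are all taken below e/2. *)
Lemma w4_value_approx (R : archiRealFieldType) (U e : R) :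
  0 <= U -> U < 1 -> 2 * U ^+ 2 + 2 * U = 1 -> 0 < e ->
  exists (d : R) (M N : nat), 0 < d /\ d < 1 /\
    (2 + U) / 3 - e <= w4_value U (1 - U) (1 - d) d M N / 4.
Proof.
move=> U0 U1 hU e0; set eta := e / 2.
have eta0 : 0 < eta by rewrite divr_gt0.
set d := eta / (1 + eta).
have dd : d * (1 + eta) = eta by rewrite divfK // gt_eqF // ltr_wpDr // ltW.
have d0 : 0 < d by rewrite divr_gt0 // ltr_wpDr // ltW.
have d1 : d < 1 by nra.
have [M PM] : exists M, (1 - d) ^+ (2 * M) <= eta.
  have [M h] := @pow_small _ ((1 - d) ^+ 2) eta (sqr_ge0 _) ltac:(nra) eta0.
  by exists M; rewrite exprM.
have [N QN] : exists N, U ^+ (3 * N) <= eta.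
  have [N h] := @pow_small _ (U ^+ 3) eta (exprn_ge0 3 U0) ltac:(nra) eta0.
  by exists N; rewrite exprM.
exists d, M, N; do 2!split => //.
have := w4_value_closed (1 - d) d M N hU.
have [tri_lo tri_hi] := andP (tri_value_bounds M (ltW d0) (ltW d1)).
have P0 : 0 <= (1 - d) ^+ (2 * M) by rewrite exprn_ge0 // subr_ge0 ltW.
have Q0 : 0 <= U ^+ (3 * N) by rewrite exprn_ge0.
move: (w4_value _ _ _ _ _ _) (tri_value _ _ _) ((1 - d) ^+ _) (U ^+ _) tri_lo tri_hi P0 Q0 PM QN.
move=> W phi P Q lo hi P0 Q0 PM QN closed.
have hQ : (1 + 2 * U + phi) * Q <= 6 * Q by nra.
have d_eta : d <= eta by nra.
have e_eta : e = 2 * eta by rewrite /eta; field.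
have key : 4 + 2 * U - d - 3 * P - 6 * Q <= (1 + 2 * U + phi) * (1 - Q) by nra.
lra.
Qed.

Definition Ustar (R : rcfType) : R := (Num.sqrt 3 - 1) / 2.

Lemma Ustar_spec (R : rcfType) :
  [/\ 0 <= Ustar R, Ustar R < 1, 2 * Ustar R ^+ 2 + 2 * Ustar R = 1
    & (3 + Num.sqrt 3) / 6 = (2 + Ustar R) / 3].
Proof.
have r0 := sqrtr_ge0 (3 : R).
have r2 : Num.sqrt (3 : R) ^+ 2 = 3 by rewrite sqr_sqrtr ?ler0n.
rewrite /Ustar; move: (Num.sqrt 3) r0 r2 => r r0 r2; split; [nra | nra | | by field].
have -> : 2 * ((r - 1) / 2) ^+ 2 + 2 * ((r - 1) / 2) = (r ^+ 2 - 1) / 2 by field.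
by rewrite r2; field.
Qed.

Lemma rmorph_w4_value (R R' : pzSemiRingType) (f : {rmorphism R -> R'}) U V S T M N :
  f (w4_value U V S T M N) = w4_value (f U) (f V) (f S) (f T) M N.
Proof.
rewrite /w4_value /tri_value !(rmorphM, rmorphD, rmorph_sum, rmorphXn, rmorph_nat).
by congr (_ * (_ + _ * _) * _); apply: eq_bigr => i _; rewrite rmorphXn.
Qed.

Definition amp (p : algR) : algC := algRval (Num.sqrt p).

Lemma amp_sq (p : algR) : 0 <= p -> (amp p)^* * amp p = algRval p.
Proof.
move=> p0; rewrite /amp (conj_Creal (algRvalP _)) -rmorphM -expr2.
by rewrite sqr_sqrtr.
Qed.

Lemma amp_norm (p : algR) : 0 <= p -> `|amp p| ^+ 2 = algRval p.
Proof. by move=> p0; rewrite normCKC amp_sq. Qed.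

Lemma amp_kraus (p : algR) : 0 <= p -> p <= 1 ->
  (amp p)^* * amp p + (amp (1 - p))^* * amp (1 - p) = 1.
Proof.
by move=> p0 p1; rewrite !amp_sq ?subr_ge0 // -rmorphD addrC subrK rmorph1.
Qed.

Lemma sqrtC3 : sqrtC 3 = algRval (Num.sqrt 3).
Proof.
rewrite -(sqrCK (sqrtr_ge0 (3 : algR) : 0 <= algRval _)); congr sqrtC.
by rewrite -rmorphXn sqr_sqrtr ?ler0n // rmorph_nat.
Qed.

Definition protocol (u d : algR) (M N : nat) : locc :=
  w4_protocol (amp u) (amp (1 - u)) (amp (1 - d)) (amp d) M N.

Lemma valid_protocol (u d : algR) M N : 0 <= u -> u <= 1 -> 0 <= d -> d <= 1 ->
  valid G_VI (protocol u d M N) W4.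
Proof.
move=> u0 u1 d0 d1; rewrite W4_Wstate.
have kd : (amp (1 - d))^* * amp (1 - d) + (amp d)^* * amp d = 1.
  by rewrite addrC amp_kraus.
exact: (valid_w4_protocol M (amp_kraus u0 u1) kd N erefl erefl erefl erefl).
Qed.

Lemma value_protocol (u d : algR) M N : 0 <= u -> u <= 1 -> 0 <= d -> d <= 1 ->
  value (protocol u d M N) W4 = algRval (w4_value u (1 - u) (1 - d) d M N / 4).
Proof.
move=> u0 u1 d0 d1; rewrite W4_Wstate.
rewrite (value_w4_protocol _ _ _ _ _ _ erefl erefl erefl erefl).
rewrite !amp_norm ?subr_ge0 // rmorphM (rmorph_w4_value algRval); congr (_ * _).
by rewrite fmorphV rmorph_nat ger0_norm ?invr_ge0 ?ler0n //; field.
Qed.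

Theorem mainTheorem4 :
  forall eps : algC, 0 < eps ->
    exists p : locc, valid G_VI p W4 /\
      (3 + sqrtC 3) / 6 - eps <= value p W4.
Proof.
move=> eps eps0; pose e : algR := in_algR (gtr0_real eps0).
have [U0 U1 hU target] := Ustar_spec algR.
have [d [M [N [d0 [d1 approx]]]]] := w4_value_approx U0 U1 hU (eps0 : 0 < e).
exists (protocol (Ustar algR) d M N).
split; first by apply: valid_protocol => //; apply: ltW.
rewrite value_protocol ?(ltW U1) ?(ltW d0) ?(ltW d1) // sqrtC3 (_ : eps = algRval e) //.
have -> : (3 + algRval (Num.sqrt 3)) / 6 - algRval e = algRval ((2 + Ustar algR) / 3 - e).
  by rewrite -target rmorphB fmorph_div rmorphD !rmorph_nat.
exact: approx.
Qed.
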